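(* All zeros of $c$, $s$, $d$ lie on the three rays $\{-\zeta_2^{j}x: x\ge 0\}$, $j\in\{-1,0,1\}$ (the bisectors of the sectors $S_p=\{z:\frac{2\pi}{3}(p-1)<\arg z<\frac{2\pi p}{3}\}$, $p=1,2,3$). More precisely, the zero sets of $c,s,d$ are respectively $\{-\zeta_2^{j}x_c(k)\}$, $\{-\zeta_2^{j}x_s(k)\}$, $\{-\zeta_2^{j}x_d(k)\}$ ($j\in\{-1,0,1\}$, $k\ge1$), where $0<x_c(1)<x_c(2)<\dots$ are the positive roots of $\cos\frac{\sqrt3}{2}x=-\frac12e^{-\frac32x}$, $0=x_s(1)<x_s(2)<\dots$ are the nonnegative roots of $\sin\left(\frac{\sqrt3}{2}x+\frac\pi6\right)=\frac12e^{-\frac32x}$, and $0=x_d(1)<x_d(2)<\dots$ are the nonnegative roots of $\sin\left(\frac{\sqrt3}{2}x-\frac\pi6\right)=-\frac12e^{-\frac32x}$; all these roots of the respective real equations are simple. Moreover, the sequence $(x_d(k))$ interlaces with $(x_s(k))$, and $(x_s(k))$ interlaces with $(x_c(k))$.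
   Context: Let $\zeta_1=1$, $\zeta_2=-\frac12+\frac{\sqrt3}{2}i$, $\zeta_3=-\frac12-\frac{\sqrt3}{2}i$ be the cube roots of unity. For $z\in\mathbb C$ define $c(z)=\frac13\sum_{k=1}^3 e^{z\zeta_k}$, $s(z)=\frac13\sum_{k=1}^3\zeta_k^{-1}e^{z\zeta_k}$, $d(z)=\frac13\sum_{k=1}^3\zeta_k^{-2}e^{z\zeta_k}$. *)

From Stdlib Require Import Reals.
From Coquelicot Require Export Coquelicot.
Open Scope R_scope.

Definition cexp (z : C) : C :=
  (exp (fst z) * cos (snd z), exp (fst z) * sin (snd z)).

Definition zeta1 : C := RtoC 1.
Definition zeta2 : C := (-1/2, sqrt 3 / 2).
Definition zeta3 : C := (-1/2, - (sqrt 3 / 2)).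

Open Scope C_scope.

Definition cfun (z : C) : C :=
  (cexp (zeta1 * z) + cexp (zeta2 * z) + cexp (zeta3 * z)) / 3.
Definition sfun (z : C) : C :=
  (/ zeta1 * cexp (zeta1 * z) + / zeta2 * cexp (zeta2 * z)
     + / zeta3 * cexp (zeta3 * z)) / 3.
Definition dfun (z : C) : C :=
  (/ (zeta1 ^ 2) * cexp (zeta1 * z) + / (zeta2 ^ 2) * cexp (zeta2 * z)
     + / (zeta3 ^ 2) * cexp (zeta3 * z)) / 3.

Close Scope C_scope.

Definition eqc (x : R) : R := cos (sqrt 3 / 2 * x) - (- (1/2) * exp (- (3/2) * x)).
Definition eqs (x : R) : R := sin (sqrt 3 / 2 * x + PI / 6) - (1/2) * exp (- (3/2) * x).
Definition eqd (x : R) : R := sin (sqrt 3 / 2 * x - PI / 6) - (- (1/2) * exp (- (3/2) * x)).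

Definition on_rays (z : C) (x : R) : Prop :=
  exists w : C, (w = Cinv zeta2 \/ w = RtoC 1 \/ w = zeta2) /\ z = Copp (Cmult w (RtoC x)).

Definition simple_root (f : R -> R) (x : R) : Prop :=
  exists l : R, is_derive f x l /\ l <> 0.

From Stdlib Require Import Reals Lra Lia.
From Coquelicot Require Import Coquelicot.
Open Scope R_scope.

(* With theta = sqrt 3 / 2 * x, each of the three real
   equations says  F sg dl x = 0  for  F sg dl x = cos (theta + dl) + sg e^(-3x/2) / 2,
   sg = +-1.  At a positive root |cos (theta + dl)| < 1/2, so the phase lies in a
   window (k PI + PI/3, k PI + 2 PI/3).  There the sine term dominates F', so a
   window holds at most one root (mean value theorem), and F changes sign across
   it, so it holds exactly one (intermediate value theorem).  This enumerates the
   positive roots (F_roots_enumeration); c_roots, s_roots, d_roots place the k-th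
   root of each equation in the sixth (m PI/3, (m+1) PI/3) of the theta-axis with
   m = 3k+1, 3k+2, 3k+3, from which monotonicity and interlacing are read off.
   F' <> 0 at the roots gives simplicity.

   Complex zeros.  c, s, d are one third of  tri z = e^z + w e^(zeta2 z) +
   conj(w) e^(zeta3 z)  for a cube root of unity w.  Since tri (zeta2 z) =
   conj(w) tri z, every zero has a rotate in the half-plane Re z <= 0; there a
   modulus/argument comparison (phase_balance_real) forces Im z = 0, and on the
   negative real axis tri = 0 is exactly the real equation (tri_zero_set). *)

Lemma sqrt3_sq : sqrt 3 * sqrt 3 = 3.
Proof. apply sqrt_sqrt; lra. Qed.

Lemma sqrt3_pos : 0 < sqrt 3.
Proof. apply sqrt_lt_R0; lra. Qed.

Lemma m1_pow_cases k : (-1) ^ k = 1 \/ (-1) ^ k = -1.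
Proof.
  induction k as [|k [IH | IH]]; simpl; [left | right | left]; rewrite ?IH; lra.
Qed.

Lemma cos_add_kPI r k : cos (r + INR k * PI) = (-1) ^ k * cos r.
Proof.
  induction k as [|k IH].
  - simpl. rewrite Rmult_0_l, Rplus_0_r; ring.
  - rewrite S_INR, Rmult_plus_distr_r, Rmult_1_l, <- Rplus_assoc, neg_cos, IH.
    simpl; ring.
Qed.

Lemma cos_sq_add_kPI r k : cos (r + INR k * PI) ^ 2 = cos r ^ 2.
Proof. rewrite cos_add_kPI; destruct (m1_pow_cases k) as [-> | ->]; ring. Qed.

Definition window (k : nat) (u : R) : Prop :=
  INR k * PI + PI / 3 < u < INR k * PI + 2 * (PI / 3).

Lemma cos_sq_small_0_PI r : 0 <= r <= PI -> cos r ^ 2 < 1 / 4 ->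
  PI / 3 < r < 2 * (PI / 3).
Proof.
  intros Hr Hc. assert (HP := PI_RGT_0).
  split; apply Rnot_le_lt; intro Hle.
  - assert (Hcos : cos (PI / 3) <= cos r) by (apply cos_decr_1; lra).
    rewrite cos_PI3 in Hcos. nra.
  - assert (Hcos : cos r <= cos (2 * (PI / 3))) by (apply cos_decr_1; lra).
    rewrite cos_2PI3 in Hcos. nra.
Qed.

Lemma cos_sq_le_window k u :
  INR k * PI + PI / 3 <= u <= INR k * PI + 2 * (PI / 3) -> cos u ^ 2 <= 1 / 4.
Proof.
  intros Hu. assert (HP := PI_RGT_0).
  replace u with ((u - INR k * PI) + INR k * PI) by ring.
  rewrite cos_sq_add_kPI.
  assert (H1 : cos (u - INR k * PI) <= cos (PI / 3)) by (apply cos_decr_1; lra).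
  assert (H2 : cos (2 * (PI / 3)) <= cos (u - INR k * PI)) by (apply cos_decr_1; lra).
  rewrite cos_PI3 in H1. rewrite cos_2PI3 in H2. nra.
Qed.

Lemma window_of_small_cos u : - (PI / 3) < u -> cos u ^ 2 < 1 / 4 ->
  exists k, window k u.
Proof.
  intros Hu Hc. assert (HP := PI_RGT_0).
  destruct (Rlt_or_le u 0) as [Hneg | Hnneg].
  - rewrite <- cos_neg in Hc. apply cos_sq_small_0_PI in Hc; lra.
  - destruct (nfloor_ex (u / PI)) as [k Hk].
    { apply Rdiv_le_0_compat; lra. }
    exists k.
    assert (Hkr : INR k * PI <= u < INR k * PI + PI).
    { replace u with (u / PI * PI) by (field; lra). split; nra. }
    replace u with ((u - INR k * PI) + INR k * PI) in Hc by ring.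
    rewrite cos_sq_add_kPI in Hc.
    apply cos_sq_small_0_PI in Hc; [unfold window | ]; lra.
Qed.

Lemma exp_decay_bounds x : 0 < x -> 0 < exp (- (3 / 2) * x) < 1.
Proof.
  intros Hx. split; [apply exp_pos |].
  rewrite <- exp_0. apply exp_increasing. lra.
Qed.

Definition F (sg dl x : R) : R :=
  cos (sqrt 3 / 2 * x + dl) + sg * (/ 2 * exp (- (3 / 2) * x)).

Definition dF (sg dl x : R) : R :=
  - (sqrt 3 / 2) * sin (sqrt 3 / 2 * x + dl) - sg * (3 / 4 * exp (- (3 / 2) * x)).

Lemma F_derive sg dl x : is_derive (F sg dl) x (dF sg dl x).
Proof. unfold F, dF. auto_derive; auto. field. Qed.

Lemma F_continuous sg dl : continuity (F sg dl).
Proof.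
  intros x. apply continuity_pt_filterlim, (ex_derive_continuous (F sg dl)).
  eexists. apply F_derive.
Qed.

Section Windows.

Variables sg dl : R.
Hypothesis sg_sign : sg ^ 2 = 1.

(* At a positive root, |cos| = e^(-3x/2)/2 < 1/2. *)
Lemma F_root_cos_small x : 0 < x -> F sg dl x = 0 ->
  cos (sqrt 3 / 2 * x + dl) ^ 2 < 1 / 4.
Proof.
  unfold F. intros Hx Hf. destruct (exp_decay_bounds x Hx) as [E0 E1].
  replace (cos (sqrt 3 / 2 * x + dl)) with (- sg * (/ 2 * exp (- (3 / 2) * x))) by lra.
  nra.
Qed.

(* Where |cos| <= 1/2 we have |sin| >= sqrt 3 / 2, so the sine term of dF
   (of size >= 3/4) dominates the exponential term (of size < 3/4). *)
Lemma dF_nonzero x : 0 < x -> cos (sqrt 3 / 2 * x + dl) ^ 2 <= 1 / 4 ->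
  dF sg dl x <> 0.
Proof.
  unfold dF. intros Hx Hc Hd. destruct (exp_decay_bounds x Hx) as [E0 E1].
  assert (Hsc := sin2_cos2 (sqrt 3 / 2 * x + dl)). unfold Rsqr in Hsc.
  assert (H3 := sqrt3_sq).
  set (S := sin (sqrt 3 / 2 * x + dl)) in *.
  set (E := exp (- (3 / 2) * x)) in *.
  assert (HS : (sqrt 3 / 2 * S) ^ 2 = (sg * (3 / 4 * E)) ^ 2).
  { replace (sqrt 3 / 2 * S) with (- (sg * (3 / 4 * E))) by lra. ring. }
  replace ((sqrt 3 / 2 * S) ^ 2) with (sqrt 3 * sqrt 3 * (S * S) / 4) in HS by field.
  replace ((sg * (3 / 4 * E)) ^ 2) with (sg ^ 2 * (9 / 16 * (E * E))) in HS by field.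
  rewrite H3, sg_sign in HS. nra.
Qed.

Lemma F_simple_root x : 0 < x -> F sg dl x = 0 -> dF sg dl x <> 0.
Proof. intros Hx Hf. apply dF_nonzero; [| left; apply F_root_cos_small]; auto. Qed.

(* By the mean value theorem, F has at most one root per closed window. *)
Lemma F_root_unique k x y : 0 < x -> 0 < y ->
  window k (sqrt 3 / 2 * x + dl) -> window k (sqrt 3 / 2 * y + dl) ->
  F sg dl x = 0 -> F sg dl y = 0 -> x = y.
Proof.
  assert (no_two_roots : forall a b, 0 < a -> a < b ->
    window k (sqrt 3 / 2 * a + dl) -> window k (sqrt 3 / 2 * b + dl) ->
    F sg dl a = 0 -> F sg dl b = 0 -> False).
  { intros a b Ha Hab Hwa Hwb Hfa Hfb. unfold window in *.
    assert (Hp := sqrt3_pos).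
    destruct (MVT_cor2 (F sg dl) (dF sg dl) a b Hab) as [c [Hmvt Hc]].
    { intros c _. apply is_derive_Reals, F_derive. }
    apply (dF_nonzero c); [lra | |].
    - apply (cos_sq_le_window k). split; nra.
    - rewrite Hfa, Hfb in Hmvt. apply (Rmult_eq_reg_r (b - a)); lra. }
  intros Hx Hy Hwx Hwy Hfx Hfy.
  destruct (Rtotal_order x y) as [H | [H | H]]; auto; exfalso.
  - exact (no_two_roots x y Hx H Hwx Hwy Hfx Hfy).
  - exact (no_two_roots y x Hy H Hwy Hwx Hfy Hfx).
Qed.

(* At the two ends of a window F takes values of opposite signs, so the
   intermediate value theorem produces a root inside it. *)
Lemma F_root_exists k : 0 < INR k * PI + PI / 3 - dl ->
  { x | 0 < x /\ window k (sqrt 3 / 2 * x + dl) /\ F sg dl x = 0 }.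
Proof.
  intros Hk. assert (Hp := sqrt3_pos). assert (HP := PI_RGT_0).
  set (xa := (INR k * PI + PI / 3 - dl) / (sqrt 3 / 2)).
  set (xb := (INR k * PI + 2 * (PI / 3) - dl) / (sqrt 3 / 2)).
  assert (Hua : sqrt 3 / 2 * xa + dl = PI / 3 + INR k * PI) by (unfold xa; field; lra).
  assert (Hub : sqrt 3 / 2 * xb + dl = 2 * (PI / 3) + INR k * PI) by (unfold xb; field; lra).
  assert (Hxa : 0 < xa) by (unfold xa; apply Rdiv_lt_0_compat; lra).
  assert (Hab : xa <= xb) by (apply (Rmult_le_reg_l (sqrt 3 / 2)); lra).
  assert (Hsigns : F sg dl xa * F sg dl xb <= 0).
  { unfold F. rewrite Hua, Hub, !cos_add_kPI, cos_PI3, cos_2PI3.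
    destruct (exp_decay_bounds xa Hxa) as [Ea0 Ea1].
    destruct (exp_decay_bounds xb ltac:(lra)) as [Eb0 Eb1].
    assert (Hsg : sg = 1 \/ sg = -1) by (destruct (Rle_or_lt 0 sg); [left | right]; nra).
    destruct (m1_pow_cases k) as [-> | ->]; destruct Hsg as [-> | ->]; nra. }
  destruct (IVT_cor (F sg dl) xa xb (F_continuous sg dl) Hab Hsigns)
    as [x [[Hx1 Hx2] Hfx]].
  exists x. assert (Hx : 0 < x) by lra.
  assert (Hc := F_root_cos_small x Hx Hfx).
  assert (Hxa' : sqrt 3 / 2 * xa <= sqrt 3 / 2 * x) by (apply Rmult_le_compat_l; lra).
  assert (Hxb' : sqrt 3 / 2 * x <= sqrt 3 / 2 * xb) by (apply Rmult_le_compat_l; lra).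
  repeat split; auto; apply Rnot_le_lt; intro Hend.
  - assert (Heq : sqrt 3 / 2 * x + dl = PI / 3 + INR k * PI) by lra.
    rewrite Heq, cos_sq_add_kPI, cos_PI3 in Hc. lra.
  - assert (Heq : sqrt 3 / 2 * x + dl = 2 * (PI / 3) + INR k * PI) by lra.
    rewrite Heq, cos_sq_add_kPI, cos_2PI3 in Hc. lra.
Qed.

Hypothesis dl_ge : - (PI / 3) <= dl.

Lemma F_root_window x : 0 < x -> F sg dl x = 0 ->
  exists k, window k (sqrt 3 / 2 * x + dl).
Proof.
  intros Hx Hf. apply window_of_small_cos; [| exact (F_root_cos_small x Hx Hf)].
  assert (Hp := sqrt3_pos). nra.
Qed.

Lemma F_roots_enumeration k0 : 0 < INR k0 * PI + PI / 3 - dl ->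
  (forall x k, 0 < x -> F sg dl x = 0 -> window k (sqrt 3 / 2 * x + dl) -> (k0 <= k)%nat) ->
  exists t : nat -> R,
    (forall k, window (k0 + k) (sqrt 3 / 2 * t k + dl)) /\
    (forall x, (0 < x /\ F sg dl x = 0) <-> exists k, x = t k).
Proof.
  intros Hk0 Hfirst.
  assert (Hroom : forall k, 0 < INR (k0 + k) * PI + PI / 3 - dl).
  { intros k. rewrite plus_INR. assert (H := pos_INR k). assert (HP := PI_RGT_0). nra. }
  set (t := fun k => proj1_sig (F_root_exists (k0 + k) (Hroom k))).
  assert (Ht : forall k,
    0 < t k /\ window (k0 + k) (sqrt 3 / 2 * t k + dl) /\ F sg dl (t k) = 0)
    by (intros k; exact (proj2_sig (F_root_exists (k0 + k) (Hroom k)))).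
  clearbody t. exists t. split; [intros k; apply Ht |].
  intros x. split.
  - intros [Hx Hf]. destruct (F_root_window x Hx Hf) as [j Hj].
    specialize (Hfirst x j Hx Hf Hj).
    exists (j - k0)%nat. destruct (Ht (j - k0)%nat) as [Ht0 [Hwt Hft]].
    replace (k0 + (j - k0))%nat with j in Hwt by lia.
    apply (F_root_unique j); auto.
  - intros [k ->]. split; apply Ht.
Qed.

End Windows.

Definition in_sixth (m : nat) (x : R) : Prop :=
  INR m * (PI / 3) < sqrt 3 / 2 * x < INR m * (PI / 3) + PI / 3.

Lemma window_sixth n j dl x : dl = (1 - INR j) * (PI / 3) ->
  window n (sqrt 3 / 2 * x + dl) -> in_sixth (3 * n + j) x.
Proof.
  intros -> Hw. unfold window, in_sixth in *.
  rewrite plus_INR, mult_INR. simpl (INR 3). lra.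
Qed.

Lemma sixth_pos m x : in_sixth m x -> 0 < x.
Proof.
  intros [Hlo _]. assert (Hm := pos_INR m). assert (HP := PI_RGT_0).
  assert (Hp := sqrt3_pos). nra.
Qed.

Lemma sixth_lt m n a b : in_sixth m a -> in_sixth n b -> (m < n)%nat -> a < b.
Proof.
  intros [_ Ha] [Hb _] Hmn. assert (HP := PI_RGT_0).
  apply le_INR in Hmn. rewrite S_INR in Hmn.
  apply (Rmult_lt_reg_l (sqrt 3 / 2)); [assert (H := sqrt3_pos); lra | nra].
Qed.

Lemma eqc_F x : eqc x = F 1 0 x.
Proof. unfold eqc, F. rewrite Rplus_0_r. field. Qed.

Lemma eqs_F x : eqs x = F (-1) (- (PI / 3)) x.
Proof.
  unfold eqs, F. rewrite <- cos_shift, <- cos_neg.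
  replace (- (PI / 2 - (sqrt 3 / 2 * x + PI / 6))) with (sqrt 3 / 2 * x + - (PI / 3))
    by field.
  field.
Qed.

Lemma eqd_F x : eqd x = - F (-1) (PI / 3) x.
Proof.
  unfold eqd, F.
  replace (sqrt 3 / 2 * x + PI / 3) with (PI / 2 + (sqrt 3 / 2 * x - PI / 6)) by field.
  rewrite cos_plus, cos_PI2, sin_PI2. field.
Qed.

(* The d-equation has no root with phase below PI/3: F vanishes at 0 and is
   decreasing there, since its sine term dominates on (PI/3, 2 PI/3). *)
Lemma F_d_no_early_root x : 0 < x -> sqrt 3 / 2 * x < PI / 3 ->
  F (-1) (PI / 3) x <> 0.
Proof.
  intros Hx Hu Hf. assert (Hp := sqrt3_pos). assert (HP := PI_RGT_0).
  destruct (MVT_cor2 (F (-1) (PI / 3)) (dF (-1) (PI / 3)) 0 x Hx) as [c [Hmvt Hc]].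
  { intros c _. apply is_derive_Reals, F_derive. }
  assert (HF0 : F (-1) (PI / 3) 0 = 0).
  { unfold F. rewrite Rmult_0_r, Rplus_0_l, Rmult_0_r, exp_0, cos_PI3. field. }
  assert (Hdec : dF (-1) (PI / 3) c < 0).
  { unfold dF. destruct (exp_decay_bounds c ltac:(lra)) as [E0 E1].
    assert (Hcx : 0 < sqrt 3 / 2 * c < sqrt 3 / 2 * x) by (split; nra).
    set (u := sqrt 3 / 2 * c + PI / 3).
    assert (Hsin : 0 < sin u) by (apply sin_gt_0; unfold u; lra).
    assert (Hcos := cos_sq_le_window 0 u ltac:(simpl; unfold u; lra)).
    assert (Hsc := sin2_cos2 u). unfold Rsqr in Hsc.
    assert (H3 := sqrt3_sq).
    assert (Hbig : sqrt 3 / 2 <= sin u) by nra.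
    nra. }
  rewrite HF0, Hf in Hmvt. nra.
Qed.

Definition cons0 (t : nat -> R) (k : nat) : R :=
  match k with O => 0 | S j => t j end.

Lemma cons0_roots (P : R -> Prop) (t : nat -> R) : P 0 ->
  (forall x, (0 < x /\ P x) <-> exists k, x = t k) ->
  forall x, (0 <= x /\ P x) <-> exists k, x = cons0 t k.
Proof.
  intros H0 Ht x. split.
  - intros [Hx HP]. destruct (Rle_lt_or_eq_dec 0 x Hx) as [Hpos | <-].
    + destruct (proj1 (Ht x) (conj Hpos HP)) as [j ->]. exists (S j). reflexivity.
    + exists O. reflexivity.
  - intros [[|j] ->]; simpl.
    + split; [lra | exact H0].
    + destruct (proj2 (Ht (t j)) (ex_intro _ j eq_refl)) as [Hpos HP]. split; [lra | exact HP].
Qed.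

Lemma c_roots : exists xc : nat -> R,
  (forall k, in_sixth (3 * k + 1) (xc k)) /\
  (forall x, (0 < x /\ cos (sqrt 3 / 2 * x) = - (1/2) * exp (- (3/2) * x))
             <-> exists k, x = xc k).
Proof.
  assert (HP := PI_RGT_0).
  destruct (F_roots_enumeration 1 0 ltac:(ring) ltac:(lra) 0) as [t [Hw Ht]].
  { simpl; lra. }
  { intros; lia. }
  exists t. split.
  - intros k. apply (window_sixth k 1 0); [simpl; ring | apply Hw].
  - intros x. rewrite <- Ht. rewrite <- eqc_F. unfold eqc. split; intros [Hx He]; split; lra.
Qed.

Lemma s_roots : exists ts : nat -> R,
  (forall k, in_sixth (3 * k + 2) (ts k)) /\
  (forall x, (0 <= x /\ sin (sqrt 3 / 2 * x + PI / 6) = (1/2) * exp (- (3/2) * x))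
             <-> exists k, x = cons0 ts k).
Proof.
  assert (HP := PI_RGT_0).
  destruct (F_roots_enumeration (-1) (- (PI / 3)) ltac:(ring) ltac:(lra) 0)
    as [t [Hw Ht]].
  { simpl; lra. }
  { intros; lia. }
  exists t. split.
  - intros k. apply (window_sixth k 2 (- (PI / 3))); [simpl; field | apply Hw].
  - apply cons0_roots.
    + rewrite Rmult_0_r, Rplus_0_l, Rmult_0_r, exp_0, sin_PI6. field.
    + intros x. rewrite <- Ht, <- eqs_F. unfold eqs. split; intros [Hx He]; split; lra.
Qed.

(* The d-equation has the root 0, then one root with theta in each sixth 3k+3
   (window 0 is empty by F_d_no_early_root). *)
Lemma d_roots : exists td : nat -> R,
  (forall k, in_sixth (3 * k + 3) (td k)) /\
  (forall x, (0 <= x /\ sin (sqrt 3 / 2 * x - PI / 6) = - (1/2) * exp (- (3/2) * x))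
             <-> exists k, x = cons0 td k).
Proof.
  assert (HP := PI_RGT_0).
  destruct (F_roots_enumeration (-1) (PI / 3) ltac:(ring) ltac:(lra) 1) as [t [Hw Ht]].
  { simpl; lra. }
  { intros x [|k] Hx Hf Hwin; [| lia]. exfalso.
    apply (F_d_no_early_root x Hx); [| exact Hf]. unfold window in Hwin. simpl in Hwin. lra. }
  exists t. split.
  - intros k. replace (3 * k + 3)%nat with (3 * (1 + k) + 0)%nat by lia.
    apply (window_sixth (1 + k) 0 (PI / 3)); [simpl; field | apply Hw].
  - apply cons0_roots.
    + rewrite Rmult_0_r, Rmult_0_r, exp_0, Rminus_0_l, sin_neg, sin_PI6. field.
    + intros x. rewrite <- Ht.
      assert (Hd : forall y, F (-1) (PI / 3) y = - eqd y) by (intros y; rewrite eqd_F; ring).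
      rewrite Hd. unfold eqd. split; intros [Hx He]; split; lra.
Qed.

(* Simplicity: each equation is +-F, and F' does not vanish at positive roots;
   the s-equation is also simple at its root 0. *)
Lemma eqc_simple x : 0 < x /\ cos (sqrt 3 / 2 * x) = - (1/2) * exp (- (3/2) * x) ->
  simple_root eqc x.
Proof.
  intros [Hx He]. exists (dF 1 0 x). split.
  - apply (is_derive_ext (F 1 0)); [intros t; symmetry; apply eqc_F | apply F_derive].
  - apply F_simple_root; [ring | exact Hx |]. rewrite <- eqc_F. unfold eqc. lra.
Qed.

Lemma eqs_simple x : 0 <= x /\ sin (sqrt 3 / 2 * x + PI / 6) = (1/2) * exp (- (3/2) * x) ->
  simple_root eqs x.
Proof.
  intros [Hx He]. exists (dF (-1) (- (PI / 3)) x). split.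
  - apply (is_derive_ext (F (-1) (- (PI / 3)))); [intros t; symmetry; apply eqs_F | apply F_derive].
  - destruct (Rle_lt_or_eq_dec 0 x Hx) as [Hpos | <-].
    + apply F_simple_root; [ring | exact Hpos |]. rewrite <- eqs_F. unfold eqs. lra.
    + unfold dF. rewrite Rmult_0_r, Rplus_0_l, Rmult_0_r, exp_0, sin_neg, sin_PI3.
      assert (H3 := sqrt3_sq). nra.
Qed.

Lemma eqd_simple x : 0 < x ->
  sin (sqrt 3 / 2 * x - PI / 6) = - (1/2) * exp (- (3/2) * x) -> simple_root eqd x.
Proof.
  intros Hx He. exists (- dF (-1) (PI / 3) x). split.
  - apply (is_derive_ext (fun t => - F (-1) (PI / 3) t)); [intros t; symmetry; apply eqd_F |].
    apply (is_derive_opp (F (-1) (PI / 3))), F_derive.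
  - apply Ropp_neq_0_compat, F_simple_root; [ring | exact Hx |].
    rewrite <- (Ropp_involutive (F _ _ x)), <- eqd_F. unfold eqd. lra.
Qed.

Lemma sixth_chain_increasing m t : (forall k, in_sixth (3 * k + m) (t k)) ->
  forall k, t k < t (S k).
Proof. intros Ht k. apply (sixth_lt _ _ _ _ (Ht k) (Ht (S k))). lia. Qed.

Lemma cons0_increasing m t : (forall k, in_sixth (3 * k + m) (t k)) ->
  forall k, cons0 t k < cons0 t (S k).
Proof.
  intros Ht [|k]; simpl.
  - exact (sixth_pos _ _ (Ht O)).
  - exact (sixth_chain_increasing m t Ht k).
Qed.

Lemma interlace_s_d ts td :
  (forall k, in_sixth (3 * k + 2) (ts k)) -> (forall k, in_sixth (3 * k + 3) (td k)) ->
  forall k, cons0 ts k <= cons0 td k /\ cons0 td k < cons0 ts (S k).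
Proof.
  intros Hs Hd [|k]; simpl.
  - split; [lra | exact (sixth_pos _ _ (Hs O))].
  - split; [left | ]; eapply sixth_lt; eauto; lia.
Qed.

Lemma interlace_s_c ts tc :
  (forall k, in_sixth (3 * k + 2) (ts k)) -> (forall k, in_sixth (3 * k + 1) (tc k)) ->
  forall k, cons0 ts k < tc k /\ tc k < cons0 ts (S k).
Proof.
  intros Hs Hc [|k]; simpl.
  - split; [exact (sixth_pos _ _ (Hc O)) | eapply sixth_lt; eauto].
  - split; eapply sixth_lt; eauto; lia.
Qed.

Lemma sin_sq_le t : sin t ^ 2 <= t ^ 2.
Proof.
  assert (Hnonneg : forall y, 0 <= y -> sin y ^ 2 <= y ^ 2).
  { intros y Hy. destruct (Rle_lt_or_eq_dec 0 y Hy) as [Hpos | <-].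
    - assert (Hup := sin_lt_x y Hpos).
      assert (Hlow : - y <= sin y).
      { destruct (Rle_or_lt 1 y) as [H1 | H1].
        - assert (Hb := SIN_bound y). lra.
        - assert (Hpi := PI2_1). assert (0 < sin y) by (apply sin_gt_0; lra). lra. }
      nra.
    - rewrite sin_0. lra. }
  destruct (Rle_or_lt 0 t) as [Ht | Ht]; [auto |].
  replace t with (- - t) by ring. rewrite sin_neg.
  replace ((- sin (- t)) ^ 2) with (sin (- t) ^ 2) by ring.
  replace ((- - t) ^ 2) with ((- t) ^ 2) by ring.
  apply Hnonneg. lra.
Qed.

(* |e^y - e^(-y)| >= 2 |y|, since y |-> e^y - e^(-y) - 2y has derivative
   e^y + e^(-y) - 2 = (e^(y/2) - e^(-y/2))^2 >= 0. *)
Lemma sinh_sq_ge y : 4 * y ^ 2 <= (exp y - exp (- y)) ^ 2.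
Proof.
  assert (Hnonneg : forall t, 0 <= t -> 2 * t <= exp t - exp (- t)).
  { intros t Ht. destruct (Rle_lt_or_eq_dec 0 t Ht) as [Hpos | <-].
    - set (h := fun s => exp s - exp (- s) - 2 * s).
      destruct (MVT_cor2 h (fun s => exp s + exp (- s) - 2) 0 t Hpos) as [c [Hmvt Hc]].
      { intros c _. apply is_derive_Reals. unfold h. auto_derive; auto. ring. }
      unfold h in Hmvt. rewrite Ropp_0, exp_0 in Hmvt.
      assert (Hprod : exp c * exp (- c) = 1) by (rewrite <- exp_plus, Rplus_opp_r; apply exp_0).
      assert (Hsq : 0 <= (exp c - exp (- c)) ^ 2) by apply pow2_ge_0.
      assert (Hpos1 := exp_pos c). assert (Hpos2 := exp_pos (- c)).
      assert (Hgrow : exp c + exp (- c) - 2 >= 0) by nra.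
      nra.
    - rewrite Ropp_0, exp_0. lra. }
  destruct (Rle_or_lt 0 y) as [Hy | Hy].
  - assert (H := Hnonneg y Hy). nra.
  - assert (H := Hnonneg (- y) ltac:(lra)). rewrite Ropp_involutive in H. nra.
Qed.

(* The modulus/argument balance behind "no zeros off the bisectors": a term of
   modulus A <= 1 and argument T = 3b/2 cannot cancel
   (Em + Ep) Cw + i (Em - Ep) Sw  (Em Ep = 1, Cw^2 + Sw^2 = 1) unless b = 0,
   because |Ep - Em| grows faster in b than |sin T|. *)
Lemma phase_balance_real A T Em Ep Cw Sw b :
  0 < A -> A <= 1 -> Em * Ep = 1 -> Cw ^ 2 + Sw ^ 2 = 1 ->
  A * cos T + (Em + Ep) * Cw = 0 -> A * sin T + (Em - Ep) * Sw = 0 ->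
  T = 3 / 2 * b -> 3 * b ^ 2 <= (Ep - Em) ^ 2 -> b = 0.
Proof.
  intros HA HA1 HE HCS Hre Him HT HD.
  destruct (Req_dec b 0) as [| Hb]; [assumption | exfalso].
  set (D := Ep - Em) in *.
  assert (Hcs := sin2_cos2 T). unfold Rsqr in Hcs.
  assert (HsT := sin_sq_le T).
  assert (HA2 : A ^ 2 = D ^ 2 + 4 * Cw ^ 2).
  { replace (A ^ 2) with ((A * cos T) ^ 2 + (A * sin T) ^ 2) by nra.
    replace (A * cos T) with (- (Em + Ep) * Cw) by lra.
    replace (A * sin T) with (D * Sw) by (unfold D; lra).
    assert ((Em + Ep) ^ 2 = D ^ 2 + 4) by (unfold D; nra). nra. }
  assert (Hb2 : 0 < b ^ 2) by (apply pow2_gt_0; auto).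
  assert (HDS : D ^ 2 * Sw ^ 2 <= A ^ 2 * (9 / 4 * b ^ 2)).
  { replace (D ^ 2 * Sw ^ 2) with ((A * sin T) ^ 2)
      by (replace (A * sin T) with (D * Sw) by (unfold D; lra); ring).
    assert (A ^ 2 * sin T ^ 2 <= A ^ 2 * T ^ 2) by (apply Rmult_le_compat_l; nra).
    rewrite HT in H. nra. }
  assert (HSw : Sw ^ 2 <= 3 / 4 * A ^ 2) by nra.
  nra.
Qed.

Open Scope C_scope.

Lemma pair_eq (a b c d : R) : a = c -> b = d -> (a, b) = (c, d).
Proof. intros -> ->. reflexivity. Qed.

Lemma cexp_add u v : cexp (u + v) = cexp u * cexp v.
Proof.
  destruct u as [a b], v as [c d]. unfold cexp, Cplus, Cmult; simpl.
  rewrite exp_plus, cos_plus, sin_plus. apply pair_eq; ring.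
Qed.

Lemma cexp_nonzero u : cexp u <> RtoC 0.
Proof.
  destruct u as [a b]. unfold cexp, RtoC; simpl. intros H. injection H as Hc Hs.
  assert (He := exp_pos a). assert (Hcs := sin2_cos2 b). unfold Rsqr in Hcs.
  apply Rmult_integral in Hc. apply Rmult_integral in Hs. nra.
Qed.

Lemma zeta2_sq : zeta2 * zeta2 = zeta3.
Proof. unfold zeta2, zeta3, Cmult; simpl. assert (H := sqrt3_sq). apply pair_eq; nra. Qed.

Lemma zeta3_zeta2 : zeta3 * zeta2 = RtoC 1.
Proof. unfold zeta2, zeta3, Cmult, RtoC; simpl. assert (H := sqrt3_sq). apply pair_eq; nra. Qed.

Lemma zeta3_sq : zeta3 * zeta3 = zeta2.
Proof. unfold zeta2, zeta3, Cmult; simpl. assert (H := sqrt3_sq). apply pair_eq; nra. Qed.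

Lemma Cinv_zeta2 : / zeta2 = zeta3.
Proof.
  assert (Hnz : zeta2 <> RtoC 0).
  { unfold zeta2, RtoC. intros H. injection H as _ H. assert (Hp := sqrt3_pos). lra. }
  transitivity ((zeta3 * zeta2) * / zeta2); [rewrite zeta3_zeta2; ring |].
  rewrite <- Cmult_assoc, Cinv_r by exact Hnz. ring.
Qed.

Lemma Cinv_zeta3 : / zeta3 = zeta2.
Proof.
  assert (Hnz : zeta3 <> RtoC 0).
  { unfold zeta3, RtoC. intros H. injection H as _ H. assert (Hp := sqrt3_pos). lra. }
  transitivity ((zeta3 * zeta2) * / zeta3); [rewrite zeta3_zeta2; ring |].
  rewrite (Cmult_comm zeta3), <- Cmult_assoc, Cinv_r by exact Hnz. ring.
Qed.

(* Since 1 + zeta2 + zeta3 = 0, one of z, zeta2 z, zeta3 z has nonpositive real part. *)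
Lemma rotation_in_left_half z :
  (fst z <= 0)%R \/ (fst (zeta2 * z)%C <= 0)%R \/ (fst (zeta3 * z)%C <= 0)%R.
Proof.
  destruct z as [a b]. unfold zeta2, zeta3, Cmult; simpl.
  destruct (Rle_or_lt a 0); [left | right]; auto.
  destruct (Rle_or_lt (-1/2 * a - sqrt 3 / 2 * b) 0); [left | right]; lra.
Qed.

Lemma on_rays_iff z x : on_rays z x <->
  z = RtoC (- x) \/ zeta2 * z = RtoC (- x) \/ zeta3 * z = RtoC (- x).
Proof.
  unfold on_rays. rewrite Cinv_zeta2, RtoC_opp. split.
  - intros [w [[-> | [-> | ->]] ->]].
    + right; left.
      replace (zeta2 * - (zeta3 * RtoC x)) with (- ((zeta3 * zeta2) * RtoC x)) by ring.
      rewrite zeta3_zeta2. ring.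
    + left. ring.
    + right; right.
      replace (zeta3 * - (zeta2 * RtoC x)) with (- ((zeta3 * zeta2) * RtoC x)) by ring.
      rewrite zeta3_zeta2. ring.
  - intros [Hz | [Hz | Hz]].
    + exists (RtoC 1). split; [auto | rewrite Hz; ring].
    + exists zeta3. split; [auto |].
      transitivity ((zeta3 * zeta2) * z); [rewrite zeta3_zeta2; ring |].
      rewrite <- Cmult_assoc, Hz. ring.
    + exists zeta2. split; [auto |].
      transitivity ((zeta3 * zeta2) * z); [rewrite zeta3_zeta2; ring |].
      rewrite (Cmult_comm zeta3), <- Cmult_assoc, Hz. ring.
Qed.

(* c, s and d are one third of  tri p q  for the unit number w = (p, q) equal to
   1, zeta3 and zeta2 respectively. *)
Definition tri (p q : R) (z : C) : C :=
  cexp z + (p, q) * cexp (zeta2 * z) + (p, - q)%R * cexp (zeta3 * z).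

(* Multiplying by e^(z/2) separates modulus and phase, for z = a + i b:
   e^(z/2) tri z = e^(3z/2) + e^(-sqrt3 b/2) w e^(i sqrt3 a/2) + e^(sqrt3 b/2) conj(w e^(i sqrt3 a/2)). *)
Lemma tri_phase_form p q a b :
  cexp (a / 2, b / 2)%R * tri p q (a, b) =
  ((exp (3/2 * a) * cos (3/2 * b) + (exp (- (sqrt 3 / 2 * b)) + exp (sqrt 3 / 2 * b)) *
      (p * cos (sqrt 3 / 2 * a) - q * sin (sqrt 3 / 2 * a)))%R,
   (exp (3/2 * a) * sin (3/2 * b) + (exp (- (sqrt 3 / 2 * b)) - exp (sqrt 3 / 2 * b)) *
      (p * sin (sqrt 3 / 2 * a) + q * cos (sqrt 3 / 2 * a)))%R).
Proof.
  unfold tri.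
  transitivity (cexp ((a / 2, b / 2)%R + (a, b))
    + (p, q) * cexp ((a / 2, b / 2)%R + zeta2 * (a, b))
    + (p, - q)%R * cexp ((a / 2, b / 2)%R + zeta3 * (a, b))).
  { rewrite !cexp_add. ring. }
  replace ((a / 2, b / 2)%R + (a, b)) with ((3/2 * a, 3/2 * b)%R)
    by (unfold Cplus; simpl; apply pair_eq; field).
  replace ((a / 2, b / 2)%R + zeta2 * (a, b)) with ((- (sqrt 3 / 2 * b), sqrt 3 / 2 * a)%R)
    by (unfold Cplus, Cmult, zeta2; simpl; apply pair_eq; field).
  replace ((a / 2, b / 2)%R + zeta3 * (a, b)) with ((sqrt 3 / 2 * b, - (sqrt 3 / 2 * a))%R)
    by (unfold Cplus, Cmult, zeta3; simpl; apply pair_eq; field).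
  unfold cexp, Cplus, Cmult; simpl. rewrite cos_neg, sin_neg.
  apply pair_eq; ring.
Qed.

Lemma tri_zero_imag p q a b : (p ^ 2 + q ^ 2 = 1)%R -> (a <= 0)%R ->
  tri p q (a, b) = RtoC 0 -> b = 0%R.
Proof.
  intros Hunit Ha Hz.
  assert (H := tri_phase_form p q a b). rewrite Hz, Cmult_0_r in H.
  unfold RtoC in H. injection H as Hre Him.
  apply (phase_balance_real (exp (3/2 * a)) (3/2 * b)
           (exp (- (sqrt 3 / 2 * b))) (exp (sqrt 3 / 2 * b))
           (p * cos (sqrt 3 / 2 * a) - q * sin (sqrt 3 / 2 * a))
           (p * sin (sqrt 3 / 2 * a) + q * cos (sqrt 3 / 2 * a)) b); try lra.
  - apply exp_pos.
  - rewrite <- exp_0. destruct (Rle_lt_or_eq_dec a 0 Ha) as [Hlt | ->].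
    + left. apply exp_increasing. lra.
    + right. f_equal. ring.
  - rewrite <- exp_plus, Rplus_opp_l. apply exp_0.
  - assert (Hcs := sin2_cos2 (sqrt 3 / 2 * a)). unfold Rsqr in Hcs.
    transitivity ((p ^ 2 + q ^ 2) * (sin (sqrt 3 / 2 * a) * sin (sqrt 3 / 2 * a)
                  + cos (sqrt 3 / 2 * a) * cos (sqrt 3 / 2 * a)))%R; [ring |].
    rewrite Hunit, Hcs. ring.
  - assert (Hs := sinh_sq_ge (sqrt 3 / 2 * b)). assert (H3 := sqrt3_sq).
    replace (4 * (sqrt 3 / 2 * b) ^ 2)%R with (sqrt 3 * sqrt 3 * b ^ 2)%R in Hs by field.
    rewrite H3 in Hs. exact Hs.
Qed.

Lemma tri_real_axis p q x : tri p q (RtoC (- x)) = RtoC 0 <->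
  (exp (- (3/2) * x) + 2 * (p * cos (sqrt 3 / 2 * x) + q * sin (sqrt 3 / 2 * x)) = 0)%R.
Proof.
  assert (H := tri_phase_form p q (- x) 0).
  rewrite !Rmult_0_r, Ropp_0, exp_0, cos_0, sin_0 in H.
  replace (sqrt 3 / 2 * - x)%R with (- (sqrt 3 / 2 * x))%R in H by ring.
  replace (3 / 2 * - x)%R with (- (3 / 2) * x)%R in H by ring.
  rewrite cos_neg, sin_neg in H. change (- x, 0)%R with (RtoC (- x)) in H.
  split.
  - intros Hz. rewrite Hz, Cmult_0_r in H. unfold RtoC in H. injection H as Hre _. lra.
  - intros Heq. set (m := cexp (- x / 2, 0 / 2)%R) in H.
    assert (Hm : m <> RtoC 0) by apply cexp_nonzero.
    assert (Hprod : m * tri p q (RtoC (- x)) = RtoC 0)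
      by (rewrite H; unfold RtoC; apply pair_eq; lra).
    transitivity ((/ m * m) * tri p q (RtoC (- x))); [rewrite Cinv_l by exact Hm; ring |].
    rewrite <- Cmult_assoc, Hprod. ring.
Qed.

Section Rotation.

Variables p q : R.
Hypothesis unit_w : (p ^ 2 + q ^ 2 = 1)%R.
(* conj w squares to w, i.e. conj w is a cube root of unity. *)
Hypothesis cube_w : (p, - q)%R * (p, - q)%R = (p, q).

Lemma conj_w_mul : (p, - q)%R * (p, q) = RtoC 1.
Proof. unfold Cmult, RtoC; simpl. apply pair_eq; nra. Qed.

Lemma tri_rotate z : tri p q (zeta2 * z) = (p, - q)%R * tri p q z.
Proof.
  unfold tri. rewrite !Cmult_assoc, zeta2_sq, zeta3_zeta2, Cmult_1_l.
  transitivity ((p, - q)%R * cexp z + ((p, - q)%R * (p, q)) * cexp (zeta2 * z)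
                + ((p, - q)%R * (p, - q)%R) * cexp (zeta3 * z));
    [rewrite conj_w_mul, cube_w | ]; ring.
Qed.

Lemma tri_rotate_zero z : tri p q (zeta2 * z) = RtoC 0 <-> tri p q z = RtoC 0.
Proof.
  rewrite tri_rotate. split; intros Hz; [| rewrite Hz; ring].
  transitivity (((p, q) * (p, - q)%R) * tri p q z);
    [rewrite (Cmult_comm (p, q)), conj_w_mul; ring |].
  rewrite <- Cmult_assoc, Hz. ring.
Qed.

(* The zero set of tri: rotate a zero into the left half-plane, where it is real. *)
Lemma tri_zero_set (X : nat -> R) :
  (forall x, (0 <= x /\ tri p q (RtoC (- x)) = RtoC 0)%R <-> exists k, x = X k) ->
  forall z, tri p q z = RtoC 0 <-> exists k, on_rays z (X k).
Proof.
  intros HX.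
  assert (Hrot3 : forall z, tri p q (zeta3 * z) = RtoC 0 <-> tri p q z = RtoC 0).
  { intros z. rewrite <- zeta2_sq, <- Cmult_assoc, !tri_rotate_zero. reflexivity. }
  assert (Hleft : forall z, (fst z <= 0)%R -> tri p q z = RtoC 0 ->
                  exists k, z = RtoC (- X k)).
  { intros [a b] Ha Hz. simpl in Ha.
    assert (Hb := tri_zero_imag p q a b unit_w Ha Hz). subst b.
    destruct (proj1 (HX (- a)%R)) as [k Hk].
    { split; [lra |]. rewrite Ropp_involutive. exact Hz. }
    exists k. rewrite <- Hk, Ropp_involutive. reflexivity. }
  intros z. setoid_rewrite on_rays_iff. split.
  - intros Hz. destruct (rotation_in_left_half z) as [H | [H | H]].
    + destruct (Hleft z H Hz) as [k Hk]. exists k. left. exact Hk.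
    + destruct (Hleft _ H (proj2 (tri_rotate_zero z) Hz)) as [k Hk].
      exists k. right; left. exact Hk.
    + destruct (Hleft _ H (proj2 (Hrot3 z) Hz)) as [k Hk].
      exists k. right; right. exact Hk.
  - intros [k Hk].
    assert (H0 : tri p q (RtoC (- X k)) = RtoC 0) by (apply HX; exists k; reflexivity).
    destruct Hk as [-> | [Hk | Hk]]; [exact H0 | |].
    + apply tri_rotate_zero. rewrite Hk. exact H0.
    + apply Hrot3. rewrite Hk. exact H0.
Qed.

End Rotation.

Lemma Cdiv3_zero (u : C) : u / 3 = RtoC 0 <-> u = RtoC 0.
Proof.
  split; intros Hu.
  - transitivity ((u / 3) * 3); [field | rewrite Hu; ring].
  - rewrite Hu. unfold Cdiv. ring.
Qed.

Lemma Cinv_one : / RtoC 1 = RtoC 1.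
Proof. unfold Cinv, RtoC; simpl. apply pair_eq; field. Qed.

Lemma cfun_tri z : cfun z = tri 1 0 z / 3.
Proof.
  unfold cfun, tri, zeta1. replace (1, - 0)%R with (RtoC 1) by (unfold RtoC; apply pair_eq; ring).
  change (1, 0)%R with (RtoC 1). rewrite !Cmult_1_l. reflexivity.
Qed.

Lemma sfun_tri z : sfun z = tri (- 1 / 2) (- (sqrt 3 / 2)) z / 3.
Proof.
  unfold sfun, tri, zeta1. rewrite Cinv_one, Cinv_zeta2, Cinv_zeta3, Ropp_involutive, Cmult_1_l.
  rewrite Cmult_1_l. reflexivity.
Qed.

Lemma dfun_tri z : dfun z = tri (- 1 / 2) (sqrt 3 / 2) z / 3.
Proof.
  unfold dfun, tri. simpl Cpow.
  rewrite !Cmult_1_r, zeta2_sq, zeta3_sq, Cinv_zeta2, Cinv_zeta3. unfold zeta1.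
  rewrite Cmult_1_l, Cinv_one, !Cmult_1_l. reflexivity.
Qed.

Lemma cfun_zeros (xc : nat -> R) :
  (forall x, (0 < x /\ cos (sqrt 3 / 2 * x) = - (1/2) * exp (- (3/2) * x))%R
             <-> exists k, x = xc k) ->
  forall z, cfun z = RtoC 0 <-> exists k, on_rays z (xc k).
Proof.
  intros Hc z. rewrite cfun_tri, Cdiv3_zero. apply tri_zero_set.
  - ring.
  - unfold Cmult; simpl. apply pair_eq; ring.
  - intros x. rewrite tri_real_axis, <- Hc. split; intros [Hx He]; split; try lra.
    destruct (Rle_lt_or_eq_dec 0 x Hx) as [Hpos | <-]; [exact Hpos |].
    rewrite Rmult_0_r, exp_0, Rmult_0_r, cos_0, sin_0 in He. lra.
Qed.

Lemma sfun_zeros (xs : nat -> R) :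
  (forall x, (0 <= x /\ sin (sqrt 3 / 2 * x + PI / 6) = (1/2) * exp (- (3/2) * x))%R
             <-> exists k, x = xs k) ->
  forall z, sfun z = RtoC 0 <-> exists k, on_rays z (xs k).
Proof.
  intros Hs z. assert (H3 := sqrt3_sq).
  rewrite sfun_tri, Cdiv3_zero. apply tri_zero_set.
  - nra.
  - unfold Cmult; simpl. apply pair_eq; nra.
  - intros x. rewrite tri_real_axis, <- Hs, sin_plus, cos_PI6, sin_PI6.
    split; intros [Hx He]; split; lra.
Qed.

Lemma dfun_zeros (xd : nat -> R) :
  (forall x, (0 <= x /\ sin (sqrt 3 / 2 * x - PI / 6) = - (1/2) * exp (- (3/2) * x))%R
             <-> exists k, x = xd k) ->
  forall z, dfun z = RtoC 0 <-> exists k, on_rays z (xd k).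
Proof.
  intros Hd z. assert (H3 := sqrt3_sq).
  rewrite dfun_tri, Cdiv3_zero. apply tri_zero_set.
  - nra.
  - unfold Cmult; simpl. apply pair_eq; nra.
  - intros x. rewrite tri_real_axis, <- Hd, sin_minus, cos_PI6, sin_PI6.
    split; intros [Hx He]; split; lra.
Qed.

Close Scope C_scope.

Theorem lemma1p2 :
  exists xc xs xd : nat -> R,
    (forall k, xc k < xc (S k)) /\
    (forall k, xs k < xs (S k)) /\
    (forall k, xd k < xd (S k)) /\
    (forall x, (0 < x /\ cos (sqrt 3 / 2 * x) = - (1/2) * exp (- (3/2) * x))
                <-> exists k, x = xc k) /\
    (forall x, (0 <= x /\ sin (sqrt 3 / 2 * x + PI / 6) = (1/2) * exp (- (3/2) * x))
                <-> exists k, x = xs k) /\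
    (forall x, (0 <= x /\ sin (sqrt 3 / 2 * x - PI / 6) = - (1/2) * exp (- (3/2) * x))
                <-> exists k, x = xd k) /\
    0 < xc 0%nat /\ xs 0%nat = 0 /\ xd 0%nat = 0 /\
    (forall z, cfun z = RtoC 0 <-> exists k, on_rays z (xc k)) /\
    (forall z, sfun z = RtoC 0 <-> exists k, on_rays z (xs k)) /\
    (forall z, dfun z = RtoC 0 <-> exists k, on_rays z (xd k)) /\
    (forall k, simple_root eqc (xc k)) /\
    (forall k, simple_root eqs (xs k)) /\
    (forall k, (0 < k)%nat -> simple_root eqd (xd k)) /\
    (forall k, xs k <= xd k /\ xd k < xs (S k)) /\
    (forall k, xs k < xc k /\ xc k < xs (S k)).
Proof.
  destruct c_roots as [xc [Hc Rc]].
  destruct s_roots as [ts [Hs Rs]].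
  destruct d_roots as [td [Hd Rd]].
  exists xc, (cons0 ts), (cons0 td).
  repeat match goal with |- _ /\ _ => split end.
  - exact (sixth_chain_increasing 1 xc Hc).
  - exact (cons0_increasing 2 ts Hs).
  - exact (cons0_increasing 3 td Hd).
  - exact Rc.
  - exact Rs.
  - exact Rd.
  - exact (sixth_pos _ _ (Hc O)).
  - reflexivity.
  - reflexivity.
  - exact (cfun_zeros xc Rc).
  - exact (sfun_zeros _ Rs).
  - exact (dfun_zeros _ Rd).
  - intros k. apply eqc_simple, Rc. exists k. reflexivity.
  - intros k. apply eqs_simple, Rs. exists k. reflexivity.
  - intros [|j] Hj; [lia |]. apply (eqd_simple _ (sixth_pos _ _ (Hd j))), Rd.
    exists (S j). reflexivity.
  - exact (interlace_s_d ts td Hs Hd).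
  - exact (interlace_s_c ts xc Hs Hc).
Qed.
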